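(* In the game described in the context, let $\mu\in\Pi_1^{SD}$ and $\nu\in\Pi_2^{SD}$ be essentially proper. Then (i) the pair $(\mu,\nu)$ is non-prolonging; and (ii) $\bar x(\mu)\ge\tilde x(\nu)$ componentwise, where $\bar x(\mu)$ and $\tilde x(\nu)$ are the unique solutions of $x=T_\mu x$ and $x=\tilde T_\nu x$, respectively.
   Context: Game model. $S=\{1,\dots,n\}$, $S_o=S\cup\{0\}$, $0$ an absorbing cost-free termination state. At $i\in S$ player I picks $\bar u\in\bar U(i)$, player II picks $\bar v\in\bar V(i)$, where $\bar U(i),\bar V(i)$ are compact subsets of complete separable metric spaces; an expected cost $c_i(\bar u,\bar v)\in\mathbb{R}$ is incurred by player I (reward to player II) and the state moves to $j\in S_o$ with probability $p_{ij}(\bar u,\bar v)$. Standing assumption: for all $i,j\in S$, $p_{ij}$ is continuous on $\bar U(i)\times\bar V(i)$, and $c_i$ is lower semicontinuous in $\bar u$ for fixed $\bar v$ and upper semicontinuous in $\bar v$ for fixed $\bar u$. For policies $\pi_1,\pi_2$ (history-dependent randomized), $x_i(\pi_1,\pi_2)=\liminf_{t\to\infty}E_{\pi_1\pi_2}[\sum_{k=0}^tc_{i_k}(\bar u_k,\bar v_k)\mid i_0=i]$. $\Pi_1^{SD}=\{\mu:\mu(i)\in\bar U(i)\}$, $\Pi_2^{SD}=\{\nu:\nu(i)\in\bar V(i)\}$. With $c(\mu,\nu)_i=c_i(\mu(i),\nu(i))$ and $P(\mu,\nu)_{ij}=p_{ij}(\mu(i),\nu(i))$, $i,j\in S$: $T_{\mu\nu}x=c(\mu,\nu)+P(\mu,\nu)x$,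 $T_\mu x=\sup_{\nu\in\Pi_2^{SD}}T_{\mu\nu}x$, $\tilde T_\nu x=\inf_{\mu\in\Pi_1^{SD}}T_{\mu\nu}x$ (componentwise). A pair of policies is prolonging if for some initial state the termination state is, with positive probability, never reached; otherwise non-prolonging. Essentially proper: $\mu\in\Pi_1^{SD}$ is essentially proper if there is $\nu\in\Pi_2^{SD}$ with $(\mu,\nu)$ non-prolonging and every $\nu\in\Pi_2^{SD}$ with $(\mu,\nu)$ prolonging has $x_i(\mu,\nu)=-\infty$ for some $i$. $\nu\in\Pi_2^{SD}$ is essentially proper if there is $\mu\in\Pi_1^{SD}$ with $(\mu,\nu)$ non-prolonging and every $\mu$ with $(\mu,\nu)$ prolonging has $x_i(\mu,\nu)=+\infty$ for some $i$. For essentially proper $\mu$ (resp. $\nu$) the equation $x=T_\mu x$ (resp. $x=\tilde T_\nu x$) has a unique solution in $\mathbb{R}^n$. *)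

From HB Require Import structures.
From mathcomp Require Import all_boot all_order all_algebra.
From mathcomp Require Import all_classical all_reals all_analysis.
Set Implicit Arguments. Unset Strict Implicit. Unset Printing Implicit Defensive.
Import Order.TTheory GRing.Theory Num.Theory.
Import numFieldNormedType.Exports.
Local Open Scope classical_set_scope.
Local Open Scope ring_scope.

Definition separable_space (T : topologicalType) :=
  exists D : set T, countable D /\ closure D = setT.

Definition lsc_on (R : realType) (T : topologicalType) (A : set T) (f : T -> R) :=
  forall x, A x -> forall a : R, a < f x -> within A (nbhs x) (fun y => a < f y).
Definition usc_on (R : realType) (T : topologicalType) (A : set T) (f : T -> R) :=
  forall x, A x -> forall a : R, f x < a -> within A (nbhs x) (fun y => f y < a).

Section Game.
Local Unset Implicit Arguments.
Variables (R : realType) (n : nat) (U V : 'I_n -> Type)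
  (Ubar : forall i, set (U i)) (Vbar : forall i, set (V i))
  (c : forall i, U i -> V i -> R)
  (* p i u v (Some j) = p_ij, p i u v None = p_i0 (termination state 0) *)
  (p : forall i, U i -> V i -> option 'I_n -> R).
Local Set Implicit Arguments.

Definition Pi1SD (mu : forall i, U i) := forall i, Ubar i (mu i).
Definition Pi2SD (nu : forall i, V i) := forall i, Vbar i (nu i).

Definition cvec (mu : forall i, U i) (nu : forall i, V i) : 'I_n -> R :=
  fun i => c i (mu i) (nu i).
Definition Pm (mu : forall i, U i) (nu : forall i, V i) (i j : 'I_n) : R :=
  p i (mu i) (nu i) (Some j).
Definition Pop mu nu (x : 'I_n -> R) : 'I_n -> R :=
  fun i => \sum_(j < n) Pm mu nu i j * x j.
Definition Tmn mu nu (x : 'I_n -> R) : 'I_n -> R :=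
  fun i => cvec mu nu i + Pop mu nu x i.
Definition Tmu mu (x : 'I_n -> R) (i : 'I_n) : \bar R :=
  ereal_sup [set (Tmn mu nu x i)%:E | nu in Pi2SD].
Definition Tnu nu (x : 'I_n -> R) (i : 'I_n) : \bar R :=
  ereal_inf [set (Tmn mu nu x i)%:E | mu in Pi1SD].

(* E_{mu nu}[ c_{i_k} | i_0 = i ] = (P^k c)_i ;
   x_i(mu,nu) = liminf_t sum_{k=0}^t (P^k c)_i  in the extended reals *)
Definition cost mu nu (i : 'I_n) : \bar R :=
  limn_einf (fun t : nat =>
    (\sum_(k < t.+1) iter k (Pop mu nu) (cvec mu nu) i)%:E).

(* Probability, from i_0 = i, of not having reached 0 after k steps is
   (P^k 1)_i; the probability of never reaching 0 is its (decreasing) limit.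
   Prolonging: for some initial state this limit is positive. *)
Definition prolonging mu nu :=
  exists i : 'I_n, exists2 eps : R, 0 < eps &
    forall k, eps <= iter k (Pop mu nu) (fun _ => 1) i.

Definition ess_proper1 mu :=
  Pi1SD mu /\
  (exists2 nu, Pi2SD nu & ~ prolonging mu nu) /\
  (forall nu, Pi2SD nu -> prolonging mu nu -> exists i, cost mu nu i = -oo%E).

Definition ess_proper2 nu :=
  Pi2SD nu /\
  (exists2 mu, Pi1SD mu & ~ prolonging mu nu) /\
  (forall mu, Pi1SD mu -> prolonging mu nu -> exists i, cost mu nu i = +oo%E).

End Game.

From HB Require Import structures.
From mathcomp Require Import all_boot all_order all_algebra.
From mathcomp Require Import all_classical all_reals all_analysis.
From mathcomp Require Import zify ring lra.
Import Order.TTheory GRing.Theory Num.Theory.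
Import numFieldNormedType.Exports.
Local Open Scope classical_set_scope.
Local Open Scope ring_scope.
Set Implicit Arguments. Unset Strict Implicit. Unset Printing Implicit Defensive.

(* If (mu, nu) prolonged, the chain P(mu, nu) would have a minimal closed class C.
   On C the Poisson equation h + g = c + P h is solvable, so the expected cost
   collected from C is t g up to a bounded error.  If g >= 0, let player II play
   nu on C and an unprolonging nu' elsewhere: the new pair still prolongs, but its
   costs are bounded below, contradicting the essential properness of mu; if
   g <= 0 the symmetric switch of player I contradicts that of nu.  For the second
   claim, xtil - xbar <= P (xtil - xbar) for the unprolonging chain P(mu, nu),
   which forces xtil - xbar <= 0. *)

Section Substochastic.
Variables (R : realType) (n : nat).
Implicit Types (A : 'I_n -> 'I_n -> R) (x y c : 'I_n -> R).

Definition pmul A x : 'I_n -> R := fun i => \sum_(j < n) A i j * x j.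
Definition piter A k x := iter k (pmul A) x.
Definition psum A c t : 'I_n -> R := fun i => \sum_(k < t) piter A k c i.
Definition one : 'I_n -> R := fun _ => 1.
Definition prolongs A :=
  exists i, exists2 eps : R, 0 < eps & forall k, eps <= piter A k one i.

Variable A : 'I_n -> 'I_n -> R.

Lemma pmulD x y : pmul A (fun j => x j + y j) = fun i => pmul A x i + pmul A y i.
Proof. by apply: funext => i; rewrite -big_split; apply: eq_bigr => j _; rewrite mulrDr. Qed.

Lemma pmulZ a x : pmul A (fun j => a * x j) = fun i => a * pmul A x i.
Proof. by apply: funext => i; rewrite mulr_sumr; apply: eq_bigr => j _; rewrite mulrCA. Qed.

Lemma piterS k x : piter A k.+1 x = pmul A (piter A k x).
Proof. exact: iterS. Qed.

Lemma piterSr k x : piter A k.+1 x = piter A k (pmul A x).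
Proof. exact: iterSr. Qed.

Lemma piterD k x y :
  piter A k (fun j => x j + y j) = fun i => piter A k x i + piter A k y i.
Proof. by elim: k => [//|k IH]; rewrite !piterS IH pmulD. Qed.

Lemma piterZ k a x : piter A k (fun j => a * x j) = fun i => a * piter A k x i.
Proof. by elim: k => [//|k IH]; rewrite !piterS IH pmulZ. Qed.

Lemma pmulN x : pmul A (fun j => - x j) = fun i => - pmul A x i.
Proof. by apply: funext => i; rewrite -sumrN; apply: eq_bigr => j _; rewrite mulrN. Qed.

Lemma piterN k x : piter A k (fun j => - x j) = fun i => - piter A k x i.
Proof. by elim: k => [//|k IH]; rewrite !piterS IH pmulN. Qed.

Lemma piterB k x y :
  piter A k (fun j => x j - y j) = fun i => piter A k x i - piter A k y i.
Proof. by rewrite piterD piterN. Qed.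

Lemma piter0 k : piter A k (fun _ => 0) = fun _ => 0.
Proof.
elim: k => [//|k IH]; rewrite piterS IH.
by apply: funext => i; rewrite /pmul big1 // => j _; rewrite mulr0.
Qed.

Lemma piter_sum k m (f : nat -> 'I_n -> R) :
  piter A k (fun j => \sum_(l < m) f l j) = fun i => \sum_(l < m) piter A k (f l) i.
Proof.
elim: m => [|m IH].
  by under eq_fun do rewrite big_ord0; rewrite piter0; under [RHS]eq_fun do rewrite big_ord0.
under eq_fun do rewrite big_ord_recr /=.
by rewrite piterD IH; apply: funext => i; rewrite big_ord_recr.
Qed.

Lemma psumD c K t i : psum A c (K + t) i = psum A c K i + piter A K (psum A c t) i.
Proof.
rewrite /psum big_split_ord /=; congr (_ + _).
by rewrite piter_sum; apply: eq_bigr => k _; rewrite /piter iterD.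
Qed.

Lemma psumS c t i : psum A c t.+1 i = c i + pmul A (psum A c t) i.
Proof. by rewrite -add1n psumD /psum big_ord1. Qed.

Lemma psumN c t i : psum A (fun j => - c j) t i = - psum A c t i.
Proof. by rewrite /psum -sumrN; apply: eq_bigr => k _; rewrite piterN. Qed.

Hypothesis A_ge0 : forall i j, 0 <= A i j.
Hypothesis A_row : forall i, \sum_(j < n) A i j <= 1.

Lemma pmul_le x y : (forall j, x j <= y j) -> forall i, pmul A x i <= pmul A y i.
Proof. by move=> xy i; apply: ler_sum => j _; apply: ler_wpM2l. Qed.

Lemma pmul_one_le1 i : pmul A one i <= 1.
Proof. by rewrite /pmul; under eq_bigr do rewrite /one mulr1; exact: A_row. Qed.

Lemma piter_le k x y : (forall j, x j <= y j) -> forall i, piter A k x i <= piter A k y i.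
Proof. by elim: k x y => [//|k IH] x y xy i; rewrite !piterS; apply: pmul_le => j; apply: IH. Qed.

Lemma piter_ge0 k x : (forall j, 0 <= x j) -> forall i, 0 <= piter A k x i.
Proof. by move=> x0 i; have := piter_le k x0 i; rewrite piter0. Qed.

Lemma piter_one_ge0 k i : 0 <= piter A k one i.
Proof. by apply: piter_ge0 => j; rewrite /one. Qed.

Lemma psum_one_ge0 t i : 0 <= psum A one t i.
Proof. by apply: sumr_ge0 => k _; exact: piter_one_ge0. Qed.

Lemma piter_one_le1 k i : piter A k one i <= 1.
Proof.
elim: k i => [//|k IH] i; rewrite /one in IH *.
by rewrite piterS; apply: le_trans (pmul_le IH i) (pmul_one_le1 i).
Qed.

Lemma piter_one_nonincreasing k l i : (k <= l)%N -> piter A l one i <= piter A k one i.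
Proof.
move=> /subnK <-; elim: (l - k)%N => [//|m IH]; rewrite addSn.
apply: le_trans IH; rewrite piterSr; apply: piter_le => j; exact: pmul_one_le1.
Qed.

Lemma piter_le_scale k x b : (forall j, x j <= b) -> forall i, piter A k x i <= b * piter A k one i.
Proof.
move=> xb i; have -> : b * piter A k one i = piter A k (fun j => b * one j) i.
  by rewrite piterZ.
by apply: piter_le => j; rewrite /one mulr1.
Qed.

Lemma norm_piter_le k x i : `|piter A k x i| <= \sum_(j < n) `|x j|.
Proof.
set H := \sum_(j < n) `|x j|.
have xH j : `|x j| <= H by rewrite /H (bigD1 j) //= lerDl sumr_ge0.
have H_ge0 : 0 <= H by rewrite /H sumr_ge0.
have bound y : (forall j, y j <= H) -> piter A k y i <= H.
  move=> yH; apply: le_trans (piter_le_scale k yH i) _.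
  by rewrite -[leRHS]mulr1 ler_wpM2l ?piter_one_le1.
rewrite ler_norml -lerNl -(congr1 (@^~ i) (piterN k x)) !bound // => j.
  exact: le_trans (ler_norm _) (xH j).
by have := xH j; rewrite -normrN; exact: le_trans (ler_norm _).
Qed.

Lemma psum_one_le t i : psum A one t i <= t%:R.
Proof.
apply: le_trans (_ : \sum_(k < t) (1 : R) <= _); last by rewrite sumr_const card_ord.
by apply: ler_sum => k _; exact: piter_one_le1.
Qed.

(* If K steps leave at most mass d < 1 in every state, the chain survives on
   average at most K / (1 - d) steps: psum (K + t) <= K + d * psum t. *)
Lemma psum_one_le_of_contraction K d : d < 1 -> (forall i, piter A K one i <= d) ->
  forall t i, psum A one t i <= K%:R / (1 - d).
Proof.
move=> d_lt1 K_contr t i.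
have d_ge0 : 0 <= d := le_trans (piter_one_ge0 K i) (K_contr i).
have K_gt0 : (0 < K)%N.
  by rewrite lt0n; apply: contraTneq d_lt1 => K0; rewrite -leNgt; move: (K_contr i); rewrite K0.
set B := K%:R / (1 - d).
have d1 : 0 < 1 - d by rewrite subr_gt0.
have KB : K%:R <= B by rewrite /B ler_pdivlMr // ler_piMr // lerBlDr lerDl.
have B_ge0 : 0 <= B by rewrite /B divr_ge0 // ltW.
have B_fix : K%:R + B * d = B by rewrite /B; field; rewrite gt_eqF.
elim: t {-2}t (leqnn t) i => [|m IH] t tm j.
  by move: tm; rewrite leqn0 => /eqP ->; rewrite /psum big_ord0.
have [tK|Kt] := ltnP t K.
  by apply: le_trans (psum_one_le _ _) (le_trans _ KB); rewrite ler_nat ltnW.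
have IHt l : psum A one (t - K) l <= B by apply: IH; lia.
rewrite -(subnKC Kt) psumD -B_fix lerD ?psum_one_le //.
by apply: le_trans (piter_le_scale K IHt j) _; rewrite ler_wpM2l ?K_contr.
Qed.

Lemma psum_one_bounded_of_escape : (forall i, exists k, piter A k one i < 1) ->
  exists B, forall t i, psum A one t i <= B.
Proof.
move=> /fin_all_exists [f f_esc].
set K := (\max_(i < n) f i)%N.
set d := \big[Order.max/0]_(i < n) piter A K one i.
have K_contr i : piter A K one i <= d by exact: le_bigmax.
have d_lt1 : d < 1.
  apply: bigmax_lt => // i _; apply: le_lt_trans (f_esc i).
  by apply: piter_one_nonincreasing; exact: leq_bigmax.
by exists (K%:R / (1 - d)); exact: psum_one_le_of_contraction.
Qed.

Lemma not_prolongs_escape : ~ prolongs A ->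
  forall i eps, 0 < eps -> exists k, piter A k one i < eps.
Proof.
move=> np i eps eps_gt0; apply: contrapT => no_k; apply: np.
exists i, eps => // k; rewrite leNgt; apply/negP => lt_k; apply: no_k; by exists k.
Qed.

Lemma not_prolongs_psum_one_bounded : ~ prolongs A ->
  exists B, forall t i, psum A one t i <= B.
Proof. by move=> np; apply: psum_one_bounded_of_escape => i; exact: not_prolongs_escape. Qed.

Lemma psum_one_bounded_not_prolongs : (exists B, forall t i, psum A one t i <= B) ->
  ~ prolongs A.
Proof.
move=> [B HB] [i [eps eps_gt0 Heps]].
have teps t : t%:R * eps <= B.
  apply: le_trans (HB t i); apply: le_trans (_ : \sum_(k < t) eps <= _).
    by rewrite sumr_const card_ord mulr_natl.
  by apply: ler_sum => k _; exact: Heps.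
have := teps (Num.truncn (B / eps)).+1; rewrite -ler_pdivlMr // => h.
by have := truncnS_gt (B / eps); rewrite ltNge h.
Qed.

(* x <= A^k x <= m A^k 1 with m bounding x, and A^k 1 becomes arbitrarily small. *)
Lemma subinvariant_le0 x : ~ prolongs A -> (forall i, x i <= pmul A x i) ->
  forall i, x i <= 0.
Proof.
move=> np x_le i.
have x_piter k j : x j <= piter A k x j.
  elim: k j => // k IH j; apply: le_trans (IH j) _; rewrite piterSr.
  exact: piter_le.
set m := \sum_(j < n) `|x j|.
have m_ge0 : 0 <= m by rewrite /m sumr_ge0.
have xm j : x j <= m by apply: le_trans (ler_norm _) _; rewrite /m (bigD1 j) //= lerDl sumr_ge0.
rewrite leNgt; apply/negP => xi_gt0.
set eps := x i / (m + 1).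
have eps_gt0 : 0 < eps by rewrite divr_gt0 // ltr_wpDl.
have [k lt_eps] := not_prolongs_escape np i eps_gt0.
have meps : m * eps = x i - eps by rewrite /eps; field; rewrite gt_eqF // ltr_wpDl.
have := le_trans (x_piter k i) (piter_le_scale k xm i).
have : m * piter A k one i <= m * eps by rewrite ler_wpM2l // ltW.
lra.
Qed.

End Substochastic.
Arguments one {R n}.

Definition closed_class (R : realType) n (A : 'I_n -> 'I_n -> R) (X : {set 'I_n}) :=
  (0 < #|X|)%N && [forall i in X, \sum_(j in X) A i j == 1].

Lemma closed_class_ext (R : realType) n (A B : 'I_n -> 'I_n -> R) (X : {set 'I_n}) :
  (forall i j, i \in X -> A i j = B i j) -> closed_class A X = closed_class B X.
Proof.
move=> AB; congr (_ && _); apply: eq_forallb => i.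
by case: (boolP (i \in X)) => //= iX; congr (_ == _); apply: eq_bigr => j _; exact: AB.
Qed.

Section ClosedClass.
Variables (R : realType) (n : nat) (A : 'I_n -> 'I_n -> R).
Hypothesis A_ge0 : forall i j, 0 <= A i j.
Hypothesis A_row : forall i, \sum_(j < n) A i j <= 1.
Implicit Types (X Y : {set 'I_n}) (x y c h : 'I_n -> R).

Lemma closed_class_sum_in X i : closed_class A X -> i \in X -> \sum_(j in X) A i j = 1.
Proof. by move=> /andP[_ /forallP cX] iX; have /implyP/(_ iX)/eqP := cX i. Qed.

Lemma closed_class_out X i j : closed_class A X -> i \in X -> j \notin X -> A i j = 0.
Proof.
move=> cX iX jX; have out0 : \sum_(l | l \notin X) A i l = 0.
  apply/eqP; rewrite eq_le sumr_ge0 // andbT.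
  by have := A_row i; rewrite (bigID (mem X)) /= closed_class_sum_in // addrC -lerBrDr subrr.
exact: (psumr_eq0P (fun l _ => A_ge0 i l) out0).
Qed.

Lemma closed_class_row X i : closed_class A X -> i \in X -> \sum_(j < n) A i j = 1.
Proof.
move=> cX iX; rewrite (bigID (mem X)) /= closed_class_sum_in // big1 ?addr0 // => j jX.
exact: closed_class_out cX iX jX.
Qed.

Lemma pmul_closed_class_eq X x y : closed_class A X -> {in X, x =1 y} ->
  {in X, pmul A x =1 pmul A y}.
Proof.
move=> cX xy i iX; rewrite /pmul (bigID (mem X)) [RHS](bigID (mem X)) /=.
congr (_ + _); first by apply: eq_bigr => j jX; rewrite xy.
by rewrite !big1 // => j jX; rewrite (closed_class_out cX iX jX) mul0r.
Qed.

Lemma piter_closed_class_eq X k x y : closed_class A X -> {in X, x =1 y} ->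
  {in X, piter A k x =1 piter A k y}.
Proof.
move=> cX; elim: k x y => [//|k IH] x y xy i iX; rewrite !piterS.
by apply: (pmul_closed_class_eq cX) => // j jX; exact: IH.
Qed.

Lemma piter_one_closed_class X k i : closed_class A X -> i \in X -> piter A k one i = 1.
Proof.
move=> cX; elim: k i => [//|k IH] i iX; rewrite piterS.
rewrite (pmul_closed_class_eq (y := one) cX) //.
by rewrite /pmul; under eq_bigr do rewrite /one mulr1; exact: closed_class_row iX.
Qed.

Lemma closed_class_prolongs X : closed_class A X -> prolongs A.
Proof.
move=> cX; have [i iX] : exists i, i \in X by apply/card_gt0P; case/andP: cX.
by exists i, 1 => // k; rewrite (piter_one_closed_class k cX iX).
Qed.

Lemma piter_one_lt1_step k i j : 0 < A i j -> piter A k one j < 1 ->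
  piter A k.+1 one i < 1.
Proof.
move=> Aij_gt0 lt_j; rewrite piterS /pmul; set x := piter A k one.
have loss : A i j * (1 - x j) <= \sum_(l < n) A i l * (1 - x l).
  rewrite (bigD1 j) //= lerDl; apply: sumr_ge0 => l _; apply: mulr_ge0 => //.
  by rewrite subr_ge0 piter_one_le1.
have split_sum : \sum_(l < n) A i l * x l = \sum_(l < n) A i l - \sum_(l < n) A i l * (1 - x l).
  by rewrite -sumrB; apply: eq_bigr => l _; rewrite mulrBr mulr1 opprB addrC subrK.
have : 0 < A i j * (1 - x j) by rewrite mulr_gt0 // subr_gt0.
have := A_row i; lra.
Qed.

(* The states that never leak mass form a closed class as soon as the chain
   prolongs: a state of that set cannot charge a leaking one. *)
Lemma closed_class_exists : prolongs A -> exists X, closed_class A X.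
Proof.
move=> prolA; set Z : {set 'I_n} := finset (fun i => `[< forall k, piter A k one i = 1 >]).
have leaks j : j \notin Z -> exists k, piter A k one j < 1.
  rewrite inE => /asboolPn /existsNP [k hk]; exists k.
  by rewrite lt_neqAle piter_one_le1 // andbT; apply/eqP.
have [Z0|Z_gt0] := posnP #|Z|.
  exfalso; apply: psum_one_bounded_not_prolongs prolA => //.
  by apply: psum_one_bounded_of_escape => // i; apply: leaks; rewrite (card0_eq Z0).
exists Z; rewrite /closed_class Z_gt0; apply/forallP => i; apply/implyP => iZ.
have stays k : piter A k one i = 1 by move: iZ; rewrite inE => /asboolP.
have out0 j : j \notin Z -> A i j = 0.
  move=> /leaks [k lt_j]; apply/eqP; rewrite eq_le A_ge0 andbT leNgt; apply/negP => Aij.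
  by have := piter_one_lt1_step Aij lt_j; rewrite stays ltxx.
have row_sum1 : \sum_(j < n) A i j = 1.
  by rewrite -(stays 1%N) /=; apply: eq_bigr => j _; rewrite /one mulr1.
apply/eqP; rewrite -[RHS]row_sum1 [RHS](bigID (mem Z)) /= [X in _ + X]big1 ?addr0 //.
Qed.

Lemma minimal_closed_class_exists : (exists X, closed_class A X) ->
  exists C, closed_class A C /\ forall Y, closed_class A Y -> Y \subset C -> Y = C.
Proof.
move=> [X cX].
have exP : exists m, [exists Y : {set 'I_n}, closed_class A Y && (#|Y| == m)].
  by exists #|X|; apply/existsP; exists X; rewrite cX eqxx.
case: (ex_minnP exP) => m /existsP [C /andP [cC /eqP card_C]] C_min.
exists C; split => // Y cY YC; apply/eqP; rewrite eqEcard YC card_C.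
by apply: C_min; apply/existsP; exists Y; rewrite cY eqxx.
Qed.

Lemma psum_closed_class_eq B X c c' : closed_class A X ->
  (forall i j, i \in X -> A i j = B i j) -> {in X, c =1 c'} ->
  forall t, {in X, psum A c t =1 psum B c' t}.
Proof.
move=> cX AB cc'.
have piter_eq k : {in X, piter A k c =1 piter B k c'}.
  elim: k => [|k IH] i iX; first exact: cc'.
  rewrite !piterS (pmul_closed_class_eq (y := piter B k c') cX) //.
  by apply: eq_bigr => j _; rewrite AB.
by move=> t i iX; apply: eq_bigr => k _; exact: piter_eq.
Qed.

Lemma psum_poisson X c h (g : R) : closed_class A X ->
  {in X, forall i, h i + g = c i + pmul A h i} ->
  forall t, {in X, forall i, psum A c t i = t%:R * g + h i - piter A t h i}.
Proof.
move=> cX poisson; elim=> [|t IH] i iX; first by rewrite /psum big_ord0 mul0r add0r subrr.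
rewrite /psum big_ord_recr /= -/(psum A c t i) IH //.
have -> : piter A t c i = piter A t (fun j => (h j + g * one j) - pmul A h j) i.
  by apply: (piter_closed_class_eq t cX _ iX) => j jX; rewrite /one mulr1 poisson //; ring.
rewrite piterB piterD piterZ (piter_one_closed_class _ cX iX) -piterS piterSr.
by rewrite -[in RHS](addn1 t) natrD; ring.
Qed.

End ClosedClass.

Section PoissonEquation.
Variables (R : realType) (n : nat) (A : 'I_n -> 'I_n -> R) (C : {set 'I_n}).
Hypothesis A_ge0 : forall i j, 0 <= A i j.
Hypothesis A_row : forall i, \sum_(j < n) A i j <= 1.
Hypothesis C_closed : closed_class A C.
Hypothesis C_minimal : forall Y, closed_class A Y -> Y \subset C -> Y = C.

(* Rows outside C are those of the identity, so a solution h of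
   poisson_mx *m h = 1_C (c - g) solves the Poisson equation on C, and
   w *m poisson_mx = 0 says w is an invariant measure of A restricted to C. *)
Definition poisson_mx : 'M[R]_n := \matrix_(i, j) ((i == j)%:R - (i \in C)%:R * A i j).

Definition stationary (w : 'rV[R]_n) := w *m poisson_mx = 0.

Lemma mul_poisson_mx (w : 'rV[R]_n) j :
  (w *m poisson_mx) 0 j = w 0 j - \sum_(i in C) w 0 i * A i j.
Proof.
rewrite !mxE; under eq_bigr do rewrite mxE mulrBr; rewrite sumrB; congr (_ - _).
  by rewrite (bigD1 j) //= eqxx mulr1 big1 ?addr0 // => i /negbTE ->; rewrite mulr0.
rewrite [RHS]big_mkcond /=; apply: eq_bigr => i _.
by case: (i \in C); rewrite ?mul1r ?mul0r ?mulr0.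
Qed.

Lemma stationaryP w : stationary w <-> forall j, w 0 j = \sum_(i in C) w 0 i * A i j.
Proof.
split=> [w_st j | w_eq]; last by apply/rowP => j; rewrite mul_poisson_mx mxE -w_eq subrr.
by apply/eqP; rewrite -subr_eq0 -mul_poisson_mx w_st mxE.
Qed.

Lemma stationary_out w : stationary w -> forall j, j \notin C -> w 0 j = 0.
Proof.
move=> /stationaryP w_st j jC; rewrite w_st big1 // => i iC.
by rewrite (closed_class_out A_ge0 A_row C_closed iC jC) mulr0.
Qed.

(* |w| is a subinvariant measure of total mass that of w (rows of A on C sum
   to 1), hence invariant. *)
Lemma stationary_norm w : stationary w -> stationary (\row_j `|w 0 j|).
Proof.
move=> w_st; apply/stationaryP => j; rewrite mxE; under eq_bigr do rewrite mxE.
set a := fun j => `|w 0 j|; set r := fun j => \sum_(i in C) a i * A i j.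
have a_le_r k : a k <= r k.
  rewrite /a ((stationaryP w).1 w_st k); apply: le_trans (ler_norm_sum _ _ _) _.
  by apply: ler_sum => i _; rewrite normrM (ger0_norm (A_ge0 _ _)).
have sum_r : \sum_(k < n) r k = \sum_(k < n) a k.
  rewrite /r exchange_big /= [RHS](bigID (mem C)) /= [X in _ = _ + X]big1 ?addr0; last first.
    by move=> k kC; rewrite /a (stationary_out w_st kC) normr0.
  by apply: eq_bigr => i iC; rewrite -mulr_sumr (closed_class_row A_ge0 A_row C_closed iC) mulr1.
have sum0 : \sum_(k < n) (r k - a k) = 0 by rewrite sumrB sum_r subrr.
have /eqP : r j - a j = 0.
  by apply: (psumr_eq0P _ sum0) => // k _; rewrite subr_ge0.
by rewrite subr_eq0 => /eqP.
Qed.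

(* The support of |w| is a closed class inside C, hence C by minimality. *)
Lemma stationary_support w : stationary w -> w != 0 -> {in C, forall j, w 0 j != 0}.
Proof.
move=> w_st w_neq0; set Y : {set 'I_n} := finset (fun j => w 0 j != 0).
have YC : Y \subset C.
  apply/fintype.subsetP => j; rewrite inE; apply: contraR => jC.
  by rewrite (stationary_out w_st jC).
have abs_st := (stationaryP _).1 (stationary_norm w_st).
suff Y_closed : closed_class A Y by move=> j; rewrite -(C_minimal Y_closed YC) inE.
apply/andP; split.
  apply/card_gt0P; apply/existsP; apply: contraR w_neq0 => /existsPn Y0.
  by apply/eqP/rowP => j; rewrite mxE; have := Y0 j; rewrite inE => /negPn /eqP.
apply/forallP => i; apply/implyP => iY.
have iC : i \in C by apply: (fintype.subsetP YC).
have out0 j : j \notin Y -> A i j = 0.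
  move=> jY; apply/eqP; rewrite eq_le A_ge0 andbT.
  have := abs_st j; rewrite !mxE; move: jY; rewrite inE => /negPn /eqP ->.
  rewrite normr0; under eq_bigr do rewrite mxE.
  rewrite (bigD1 i) //= => /esym/eqP; rewrite paddr_eq0; last 2 first.
  - exact: mulr_ge0.
  - by apply: sumr_ge0 => k _; apply: mulr_ge0.
  move=> /andP [/eqP wA0 _].
  have wi : `|w 0 i| != 0 by rewrite normr_eq0; move: iY; rewrite inE.
  by move/eqP: wA0; rewrite mulf_eq0 (negbTE wi) /= => /eqP ->.
apply/eqP; rewrite -(closed_class_row A_ge0 A_row C_closed iC) [RHS](bigID (mem Y)) /=.
by rewrite [X in _ = _ + X]big1 ?addr0.
Qed.

Lemma stationary_pos_exists : exists2 rho, stationary rho &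
  (forall j, 0 <= rho 0 j) /\ {in C, forall j, 0 < rho 0 j}.
Proof.
have [i0 i0C] : exists i0, i0 \in C by apply/card_gt0P; case/andP: C_closed.
set indC : 'rV[R]_n := \row_j (j \in C)%:R.
have indC_ker : indC *m poisson_mx^T = 0.
  apply/rowP => i; rewrite !mxE; under eq_bigr do rewrite !mxE mulrBr.
  rewrite sumrB (bigD1 i) //= eqxx mulr1 big1 ?addr0; last first.
    by move=> j; rewrite eq_sym => /negbTE ->; rewrite mulr0.
  have [iC|iC] := boolP (i \in C); last by rewrite big1 ?subrr // => j _; rewrite mul0r mulr0.
  apply/eqP; rewrite subr_eq0 eq_sym; apply/eqP.
  transitivity (\sum_(j in C) A i j); last exact: closed_class_sum_in.
  rewrite [RHS]big_mkcond /=; apply: eq_bigr => j _.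
  by case: (j \in C); rewrite /= ?mulr1n ?mul1r ?mul0r.
have /det0P [w w_neq0 w_st] : \det poisson_mx == 0.
  rewrite -det_tr; apply/det0P; exists indC => //.
  by apply/negP => /eqP /rowP /(_ i0); rewrite !mxE i0C => /eqP; rewrite oner_eq0.
exists (\row_j `|w 0 j|); first exact: stationary_norm.
by split=> [j|j jC]; rewrite mxE // normr_gt0; exact: stationary_support.
Qed.

(* The invariant measure is unique up to scaling: u - (u_i0 / rho_i0) rho is
   invariant and vanishes at i0 in C, hence is 0. *)
Lemma kermx_poisson_mx rho : stationary rho -> rho != 0 ->
  (kermx poisson_mx <= rho)%MS.
Proof.
move=> rho_st rho_neq0.
have [i0 i0C] : exists i0, i0 \in C by apply/card_gt0P; case/andP: C_closed.
have rho_i0 := stationary_support rho_st rho_neq0 i0C.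
apply/row_subP => k; set u := row k (kermx poisson_mx).
have u_st : stationary u by rewrite /stationary /u -row_mul mulmx_ker row0.
clearbody u.
set a := u 0 i0 / rho 0 i0.
have diff_st : stationary (u - a *: rho).
  by rewrite /stationary mulmxBl -scalemxAl u_st rho_st scaler0 subrr.
suff -> : u = a *: rho by exact: scalemx_sub (submx_refl _).
apply/eqP; rewrite -subr_eq0; apply: contraT => diff_neq0.
have := stationary_support diff_st diff_neq0 i0C.
by rewrite !mxE /a divfK // subrr eqxx.
Qed.

(* Dimension count: both sides have rank n - 1. *)
Lemma kermx_tr_poisson_mx rho : stationary rho -> rho != 0 ->
  (kermx rho^T <= poisson_mx^T)%MS.
Proof.
move=> rho_st rho_neq0.
have rank_M : (n - \rank poisson_mx <= 1)%N.
  rewrite -mxrank_ker; apply: leq_trans (mxrankS (kermx_poisson_mx rho_st rho_neq0)) _.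
  exact: rank_leq_row.
have rank_rho : \rank rho = 1%N.
  by apply/eqP; rewrite eqn_leq rank_leq_row lt0n mxrank_eq0 rho_neq0.
have MK : (poisson_mx^T <= kermx rho^T)%MS.
  by apply/sub_kermxP; rewrite -trmx_mul rho_st trmx0.
have [le_rank <-] := mxrank_leqif_sup MK.
move: le_rank; rewrite mxrank_tr mxrank_ker mxrank_tr rank_rho => le_rank.
by apply/eqP; lia.
Qed.

Lemma poisson_solvable c :
  exists g, exists h, {in C, forall i, h i + g = c i + pmul A h i}.
Proof.
have [rho rho_st [rho_ge0 rho_gt0]] := stationary_pos_exists.
have [i0 i0C] : exists i0, i0 \in C by apply/card_gt0P; case/andP: C_closed.
have rho_neq0 : rho != 0.
  by apply: contraTneq (rho_gt0 _ i0C) => ->; rewrite mxE ltxx.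
set mass := \sum_(j < n) rho 0 j.
have mass_gt0 : 0 < mass.
  rewrite /mass (bigD1 i0) //=; apply: (lt_le_trans (rho_gt0 _ i0C)).
  by rewrite lerDl sumr_ge0.
set g := (\sum_(j < n) rho 0 j * c j) / mass.
set b : 'rV[R]_n := \row_i ((i \in C)%:R * (c i - g)).
have b_ker : (b <= kermx rho^T)%MS.
  apply/sub_kermxP; apply/rowP => k; rewrite (ord1 k) !mxE.
  under eq_bigr => j _.
    rewrite !mxE (_ : _ * _ * _ = rho 0 j * c j - g * rho 0 j); last first.
      have [jC|jC] := boolP (j \in C); first by rewrite mulr1n mul1r; ring.
      by rewrite (stationary_out rho_st jC) mulr0 mul0r mulr0 subrr.
    over.
  by rewrite sumrB -mulr_sumr /g divfK ?subrr // gt_eqF.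
have [h hM] : exists h, b = h *m poisson_mx^T.
  by apply/submxP; apply: submx_trans b_ker (kermx_tr_poisson_mx rho_st rho_neq0).
exists g, (fun j => h 0 j) => i iC.
have := congr1 (fun m : 'rV[R]_n => m 0 i) hM; rewrite /= !mxE iC mul1r.
under eq_bigr do rewrite !mxE iC mul1r mulrBr.
rewrite sumrB (bigD1 i) //= eqxx mulr1 big1 ?addr0; last first.
  by move=> j; rewrite eq_sym => /negbTE ->; rewrite mulr0.
rewrite /pmul; under [X in _ = _ - X]eq_bigr do rewrite mulrC.
lra.
Qed.

End PoissonEquation.

Section EscapeToClosedClass.
Variables (R : realType) (n : nat) (P : 'I_n -> 'I_n -> R).
Hypothesis P_ge0 : forall i j, 0 <= P i j.
Hypothesis P_row : forall i, \sum_(j < n) P i j <= 1.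
Hypothesis P_transient : ~ prolongs P.

(* Off C the chain Q moves like the transient P, so the cost collected before
   reaching C is at most max |c| times the expected lifetime under P. *)
Lemma psum_lower_bound_propagate (Q : 'I_n -> 'I_n -> R) (C : {set 'I_n}) c B :
  (forall i j, i \notin C -> Q i j = P i j) -> 0 <= B ->
  (forall t, {in C, forall i, - B <= psum Q c t i}) ->
  exists L, forall t i, L <= psum Q c t i.
Proof.
move=> QP B_ge0 C_bound.
have [S S_bound] := not_prolongs_psum_one_bounded P_ge0 P_row P_transient.
set D := \sum_(j < n) `|c j|.
have D_ge0 : 0 <= D by apply: sumr_ge0 => j _.
have cD i : - D <= c i.
  rewrite lerNl; apply: le_trans (ler_norm _) _.
  by rewrite normrN /D (bigD1 i) //= lerDl sumr_ge0.
have bound t i : - B - D * psum P one t i <= psum Q c t i.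
  elim: t i => [|t IH] i; first by rewrite /psum !big_ord0 mulr0 subr0 oppr_le0.
  have [iC|iC] := boolP (i \in C).
    by apply: le_trans (C_bound _ _ iC); rewrite lerBlDr lerDl mulr_ge0 ?psum_one_ge0.
  rewrite !psumS (_ : pmul Q _ i = pmul P (psum Q c t) i); last first.
    by apply: eq_bigr => j _; rewrite QP.
  have := pmul_le P_ge0 IH i.
  have -> : (fun j => - B - D * psum P one t j) =
            (fun j => (- B) * one j + (- D) * psum P one t j).
    by apply: funext => j; rewrite /one mulr1 mulNr.
  rewrite pmulD !pmulZ.
  have : - B <= - B * pmul P one i by rewrite mulNr lerN2 ler_piMr // pmul_one_le1.
  rewrite /one; have := cD i; nra.
exists (- B - D * S) => t i; apply: le_trans (bound t i).
by rewrite lerB // ler_wpM2l.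
Qed.

(* On C the partial sums are t g + h - A^t h >= - 2 sum |h|. *)
Lemma psum_lower_bound_of_poisson (A Q : 'I_n -> 'I_n -> R) (C : {set 'I_n})
    (c d h : 'I_n -> R) (g : R) :
  (forall i j, 0 <= A i j) -> (forall i, \sum_(j < n) A i j <= 1) ->
  closed_class A C -> {in C, forall i, h i + g = c i + pmul A h i} -> 0 <= g ->
  (forall i j, i \in C -> A i j = Q i j) -> (forall i j, i \notin C -> Q i j = P i j) ->
  {in C, c =1 d} -> exists L, forall t i, L <= psum Q d t i.
Proof.
move=> A_ge0 A_row C_closed poisson g_ge0 AQ QP cd.
set H := \sum_(j < n) `|h j|.
have hH i : `|h i| <= H by rewrite /H (bigD1 i) //= lerDl sumr_ge0.
apply: (psum_lower_bound_propagate (B := 2 * H) QP); first by rewrite mulr_ge0 ?sumr_ge0.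
move=> t i iC.
rewrite -(psum_closed_class_eq A_ge0 A_row C_closed AQ cd) //.
rewrite (psum_poisson A_ge0 A_row C_closed poisson) //.
have /ler_normlP[_ piter_le] : `|piter A t h i| <= H := norm_piter_le A_ge0 A_row t h i.
have /ler_normlP[h_ge _] : `|h i| <= H := hH i.
have : 0 <= t%:R * g by rewrite mulr_ge0.
lra.
Qed.

Lemma psum_upper_bound_of_poisson (A Q : 'I_n -> 'I_n -> R) (C : {set 'I_n})
    (c d h : 'I_n -> R) (g : R) :
  (forall i j, 0 <= A i j) -> (forall i, \sum_(j < n) A i j <= 1) ->
  closed_class A C -> {in C, forall i, h i + g = c i + pmul A h i} -> g <= 0 ->
  (forall i j, i \in C -> A i j = Q i j) -> (forall i j, i \notin C -> Q i j = P i j) ->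
  {in C, c =1 d} -> exists L, forall t i, psum Q d t i <= L.
Proof.
move=> A_ge0 A_row C_closed poisson g_le0 AQ QP cd.
have poissonN : {in C, forall i, - h i + - g = - c i + pmul A (fun j => - h j) i}.
  by move=> i iC; rewrite pmulN; have := poisson i iC; lra.
have negd : {in C, (fun j => - c j) =1 (fun j => - d j)}.
  by move=> i iC /=; rewrite cd.
have [|L L_le] := psum_lower_bound_of_poisson A_ge0 A_row C_closed poissonN _ AQ QP negd.
  by rewrite oppr_ge0.
by exists (- L) => t i; rewrite lerNr -psumN.
Qed.

End EscapeToClosedClass.

Lemma sum_option (M : nmodType) (I : finType) (F : option I -> M) :
  \sum_(o : option I) F o = F None + \sum_(i : I) F (Some i).
Proof.
rewrite (bigD1 None) //=; congr (_ + _).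
rewrite (reindex_omap Some id) //=; last by case.
by apply: eq_bigl => i /=; rewrite eqxx.
Qed.

Lemma limn_einfE (R : realType) (u : (\bar R)^nat) :
  limn_einf u = ereal_sup (range (einfs u)).
Proof. by rewrite limn_einf_lim; apply: cvg_lim => //; exact: cvg_einfs_sup. Qed.

Lemma limn_einf_ge (R : realType) (u : (\bar R)^nat) (b : \bar R) :
  (forall k, (b <= u k)%E) -> (b <= limn_einf u)%E.
Proof.
move=> b_le; rewrite limn_einfE.
apply: le_ereal_sup_tmp; exists (einfs u 0%N) => //.
by apply: le_ereal_inf_tmp => _ [k _ <-]; exact: b_le.
Qed.

Lemma limn_einf_le (R : realType) (u : (\bar R)^nat) (b : \bar R) :
  (forall k, (u k <= b)%E) -> (limn_einf u <= b)%E.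
Proof.
move=> le_b; rewrite limn_einfE.
apply: ge_ereal_sup => _ [m _ <-]; apply: ge_ereal_inf.
by exists (u m) => //; exists m => /=.
Qed.

Section Game.
Local Unset Implicit Arguments.
Variables (R : realType) (n : nat) (U V : 'I_n -> Type)
  (Ubar : forall i, set (U i)) (Vbar : forall i, set (V i))
  (c : forall i, U i -> V i -> R) (p : forall i, U i -> V i -> option 'I_n -> R).
Local Set Implicit Arguments.
Hypothesis p_prob : forall i u v, Ubar i u -> Vbar i v ->
  (forall j, 0 <= p i u v j) /\ \sum_(j : option 'I_n) p i u v j = 1.
Implicit Types (mu : forall i, U i) (nu : forall i, V i) (C : {set 'I_n}).

Definition patch (T : 'I_n -> Type) C (f g : forall i, T i) : forall i, T i :=
  fun i => if i \in C then f i else g i.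

Lemma Pi1SD_patch C mu mu' : Pi1SD Ubar mu -> Pi1SD Ubar mu' -> Pi1SD Ubar (patch C mu mu').
Proof. by move=> mu_ok mu'_ok i; rewrite /patch; case: (i \in C). Qed.

Lemma Pi2SD_patch C nu nu' : Pi2SD Vbar nu -> Pi2SD Vbar nu' -> Pi2SD Vbar (patch C nu nu').
Proof. by move=> nu_ok nu'_ok i; rewrite /patch; case: (i \in C). Qed.

Lemma Pm_ge0 mu nu : Pi1SD Ubar mu -> Pi2SD Vbar nu -> forall i j, 0 <= Pm p mu nu i j.
Proof. by move=> mu_ok nu_ok i j; have [p_ge0 _] := p_prob (mu_ok i) (nu_ok i); exact: p_ge0. Qed.

Lemma Pm_row mu nu : Pi1SD Ubar mu -> Pi2SD Vbar nu ->
  forall i, \sum_(j < n) Pm p mu nu i j <= 1.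
Proof.
move=> mu_ok nu_ok i; have [p_ge0 p_sum] := p_prob (mu_ok i) (nu_ok i).
by rewrite -p_sum sum_option lerDr.
Qed.

Lemma cost_neqNy mu nu : (exists L, forall t i, L <= psum (Pm p mu nu) (cvec c mu nu) t i) ->
  forall i, cost c p mu nu i != -oo%E.
Proof.
move=> [L L_le] i; apply: contraTneq (ltNyr L) => cost_Ny.
rewrite -leNgt -cost_Ny; apply: limn_einf_ge => t; rewrite lee_fin; exact: L_le t.+1 i.
Qed.

Lemma cost_neqy mu nu : (exists L, forall t i, psum (Pm p mu nu) (cvec c mu nu) t i <= L) ->
  forall i, cost c p mu nu i != +oo%E.
Proof.
move=> [L le_L] i; apply: contraTneq (ltry L) => cost_y.
rewrite -leNgt -cost_y; apply: limn_einf_le => t; rewrite lee_fin; exact: le_L t.+1 i.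
Qed.

Section ClosedClassOfPair.
Variables (mu : forall i, U i) (nu : forall i, V i) (C : {set 'I_n}) (g : R) (h : 'I_n -> R).
Hypotheses (mu_ok : Pi1SD Ubar mu) (nu_ok : Pi2SD Vbar nu).
Hypothesis C_closed : closed_class (Pm p mu nu) C.
Hypothesis poisson :
  {in C, forall i, h i + g = cvec c mu nu i + pmul (Pm p mu nu) h i}.

Lemma prolonging_patch2_cost_neqNy nu' : Pi2SD Vbar nu' -> ~ prolonging p mu nu' -> 0 <= g ->
  prolonging p mu (patch C nu nu') /\ forall i, cost c p mu (patch C nu nu') i != -oo%E.
Proof.
move=> nu'_ok nu'_np g_ge0; set nuC := patch C nu nu'.
have nuC_ok : Pi2SD Vbar nuC by exact: Pi2SD_patch.
have in_C i j : i \in C -> Pm p mu nu i j = Pm p mu nuC i j by rewrite /Pm /nuC /patch => ->.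
have out_C i j : i \notin C -> Pm p mu nuC i j = Pm p mu nu' i j.
  by rewrite /Pm /nuC /patch => /negbTE ->.
split.
  apply: (closed_class_prolongs (Pm_ge0 mu_ok nuC_ok) (Pm_row mu_ok nuC_ok) (X := C)).
  by rewrite -(closed_class_ext in_C).
apply: cost_neqNy; apply: (psum_lower_bound_of_poisson (Pm_ge0 mu_ok nu'_ok) (Pm_row mu_ok nu'_ok)
  nu'_np (Pm_ge0 mu_ok nu_ok) (Pm_row mu_ok nu_ok) C_closed poisson g_ge0 in_C out_C).
by move=> i iC; rewrite /cvec /nuC /patch iC.
Qed.

Lemma prolonging_patch1_cost_neqy mu' : Pi1SD Ubar mu' -> ~ prolonging p mu' nu -> g <= 0 ->
  prolonging p (patch C mu mu') nu /\ forall i, cost c p (patch C mu mu') nu i != +oo%E.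
Proof.
move=> mu'_ok mu'_np g_le0; set muC := patch C mu mu'.
have muC_ok : Pi1SD Ubar muC by exact: Pi1SD_patch.
have in_C i j : i \in C -> Pm p mu nu i j = Pm p muC nu i j by rewrite /Pm /muC /patch => ->.
have out_C i j : i \notin C -> Pm p muC nu i j = Pm p mu' nu i j.
  by rewrite /Pm /muC /patch => /negbTE ->.
split.
  apply: (closed_class_prolongs (Pm_ge0 muC_ok nu_ok) (Pm_row muC_ok nu_ok) (X := C)).
  by rewrite -(closed_class_ext in_C).
apply: cost_neqy; apply: (psum_upper_bound_of_poisson (Pm_ge0 mu'_ok nu_ok) (Pm_row mu'_ok nu_ok)
  mu'_np (Pm_ge0 mu_ok nu_ok) (Pm_row mu_ok nu_ok) C_closed poisson g_le0 in_C out_C).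
by move=> i iC; rewrite /cvec /muC /patch iC.
Qed.

End ClosedClassOfPair.

Lemma ess_proper_not_prolonging mu nu :
  ess_proper1 Ubar Vbar c p mu -> ess_proper2 Ubar Vbar c p nu -> ~ prolonging p mu nu.
Proof.
move=> [mu_ok [[nu' nu'_ok nu'_np] mu_ep]] [nu_ok [[mu' mu'_ok mu'_np] nu_ep]] prol.
have P_ge0 := Pm_ge0 mu_ok nu_ok; have P_row := Pm_row mu_ok nu_ok.
have [C [C_closed C_min]] :=
  minimal_closed_class_exists (closed_class_exists P_ge0 P_row prol).
have [g [h poisson]] := poisson_solvable P_ge0 P_row C_closed C_min (cvec c mu nu).
have [g_ge0|g_lt0] := lerP 0 g.
  have [prolC costC] :=
    prolonging_patch2_cost_neqNy mu_ok nu_ok C_closed poisson nu'_ok nu'_np g_ge0.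
  by have [i /eqP] := mu_ep _ (Pi2SD_patch C nu_ok nu'_ok) prolC; rewrite (negbTE (costC i)).
have [prolC costC] :=
  prolonging_patch1_cost_neqy mu_ok nu_ok C_closed poisson mu'_ok mu'_np (ltW g_lt0).
by have [i /eqP] := nu_ep _ (Pi1SD_patch C mu_ok mu'_ok) prolC; rewrite (negbTE (costC i)).
Qed.

(* xtil - xbar is a subsolution of the unprolonging chain P(mu, nu). *)
Lemma fixed_points_le mu nu xbar xtil :
  Pi1SD Ubar mu -> Pi2SD Vbar nu -> ~ prolonging p mu nu ->
  (forall i, (xbar i)%:E = Tmu Vbar c p mu xbar i) ->
  (forall i, (xtil i)%:E = Tnu Ubar c p nu xtil i) ->
  forall i, xtil i <= xbar i.
Proof.
move=> mu_ok nu_ok np xbar_fix xtil_fix i; rewrite -subr_le0.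
have xbar_ge j : Tmn c p mu nu xbar j <= xbar j.
  by rewrite -lee_fin xbar_fix; apply: ereal_sup_ubound; exists nu.
have xtil_le j : xtil j <= Tmn c p mu nu xtil j.
  by rewrite -lee_fin xtil_fix; apply: ereal_inf_lbound; exists mu.
apply: (subinvariant_le0 (Pm_ge0 mu_ok nu_ok) (x := fun j => xtil j - xbar j) np) => j.
have := xbar_ge j; have := xtil_le j.
by rewrite pmulD pmulN /Tmn /Pop /pmul /=; lra.
Qed.

End Game.

Theorem lemma2p2 (R : realType) (n : nat)
  (U V : 'I_n -> completePseudoMetricType R)
  (Ubar : forall i, set (U i)) (Vbar : forall i, set (V i))
  (c : forall i, U i -> V i -> R)
  (p : forall i, U i -> V i -> option 'I_n -> R)
  (hU : forall i, hausdorff_space (U i)) (hV : forall i, hausdorff_space (V i))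
  (sU : forall i, separable_space (U i)) (sV : forall i, separable_space (V i))
  (cU : forall i, compact (Ubar i)) (cV : forall i, compact (Vbar i))
  (p_prob : forall i u v, Ubar i u -> Vbar i v ->
     (forall j, 0 <= p i u v j) /\ \sum_(j : option 'I_n) p i u v j = 1)
  (p_cont : forall i j : 'I_n,
     {within Ubar i `*` Vbar i, continuous (fun uv => p i uv.1 uv.2 (Some j))})
  (c_lsc : forall i v, Vbar i v -> lsc_on (Ubar i) (fun u => c i u v))
  (c_usc : forall i u, Ubar i u -> usc_on (Vbar i) (fun v => c i u v))
  (mu : forall i, U i) (nu : forall i, V i) :
  ess_proper1 Ubar Vbar c p mu -> ess_proper2 Ubar Vbar c p nu ->
  ~ prolonging p mu nu /\
  (forall xbar xtil : 'I_n -> R,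
     (forall i, (xbar i)%:E = Tmu Vbar c p mu xbar i) ->
     (forall i, (xtil i)%:E = Tnu Ubar c p nu xtil i) ->
     forall i, xtil i <= xbar i).
Proof.
move=> mu_ep nu_ep; have np := ess_proper_not_prolonging p_prob mu_ep nu_ep.
split=> // xbar xtil xbar_fix xtil_fix.
exact (fixed_points_le p_prob (proj1 mu_ep) (proj1 nu_ep) np xbar_fix xtil_fix).
Qed.
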